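(* Let $k\ge 2$. For every $n\ge 2k$ there are weighted $k$-uniform hypergraphs $w_1,\ldots,w_k:[n]^{(k)}\to\mathbb{R}$ such that, for every $i$, $w_i([n])=0$ and $\|w_i\|_1=\binom nk$, and such that for all $1\le i<j\le k$ we have $$\operatorname{disc}(w_i,w_j)=0.$$
   Context: $[n]=\{1,\ldots,n\}$ and $V^{(k)}$ denotes the family of $k$-element subsets of $V$. A weighted $k$-uniform hypergraph on $V$ is a function $w:V^{(k)}\to\mathbb{R}$; $w(S)=\sum_{e\in S^{(k)}}w(e)$ for $S\subseteq V$, $\|w\|_1=\sum_{e}|w(e)|$, $\langle w,u\rangle=\sum_{e\in V^{(k)}}w(e)u(e)$, and the density is $d(w)=w(V)/\binom{|V|}{k}$. For a permutation $\pi$ of $V$, $w_\pi(e)=w(\pi^{-1}(e))$. With $n=|V|$, $\operatorname{disc}^+(w,u)=\max_\pi\langle w_\pi,u\rangle-d(w)d(u)\binom nk$, $\operatorname{disc}^-(w,u)=d(w)d(u)\binom nk-\min_\pi\langle w_\pi,u\rangle$ (maxima/minima over all permutations $\pi$ of $V$), and $\operatorname{disc}(w,u)=\max\{\operatorname{disc}^+(w,u),\operatorname{disc}^-(w,u)\}=\max_\pi|\langle w_\pi,u\rangle-d(w)d(u)\binom nk|$. *)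

From mathcomp Require Import all_boot all_order all_fingroup all_algebra.
From mathcomp Require Import reals.
Set Implicit Arguments. Unset Strict Implicit. Unset Printing Implicit Defensive.
Import Order.TTheory GRing.Theory Num.Theory.
Local Open Scope ring_scope.

(* A weighted k-uniform hypergraph is a function w : {set 'I_n} -> R whose
   values on sets of size different from k are ignored. *)
Section Hyper.
Variables (R : realFieldType) (n k : nat).
Implicit Types (w u : {set 'I_n} -> R) (S : {set 'I_n}).

Definition hw w S : R := \sum_(e : {set 'I_n} | (e \subset S) && (#|e| == k)) w e.

Definition l1norm w : R := \sum_(e : {set 'I_n} | #|e| == k) `|w e|.

Definition inner w u : R := \sum_(e : {set 'I_n} | #|e| == k) w e * u e.

Definition density w : R := hw w setT / ('C(n, k))%:R.

Definition wperm w (pi : {perm 'I_n}) : {set 'I_n} -> R :=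
  fun e => w ((pi^-1)%g @: e).

Definition disc w u : R :=
  \big[Num.max/0]_(pi : {perm 'I_n})
     `|inner (wperm w pi) u - density w * density u * ('C(n, k))%:R|.
End Hyper.

From mathcomp Require Import all_boot all_order all_fingroup all_algebra.
From mathcomp Require Import reals.
From mathcomp Require Import zify.
Import Order.TTheory GRing.Theory Num.Theory.
Local Open Scope ring_scope.
Set Implicit Arguments. Unset Strict Implicit.

(* Fix 2k distinct vertices, grouped in pairs (p(2r), p(2r+1)), and put
   f_t(e) = prod_(r < t) ([p(2r) \in e] - [p(2r+1) \in e]).  On the k-slice,
   f_t is orthogonal to every subset indicator [T \subset e] with |T| < t: some
   pair avoids T, and exchanging its two vertices is an involution of the slice
   that fixes [T \subset e] and negates f_t.  Hence f_t is orthogonal to every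
   function of degree < t, in particular to the constant 1 and to any
   relabelling of f_s for s < t.  Normalising f_1, ..., f_k to l1-norm C(n,k)
   gives hypergraphs of density 0 whose permuted inner products all vanish. *)

Section Slice.
Variables (R : numDomainType) (V : finType).
Implicit Types (e T U : {set V}) (p : nat -> V).

Definition ind (c : V) e : R := (c \in e)%:R.

Definition pair_prod p (t : nat) e : R :=
  \prod_(r < t) (ind (p (2 * r)%N) e - ind (p (2 * r).+1) e).

Definition degree_le (m : nat) (F : {set V} -> R) :=
  exists2 al : {set V} -> R, (forall T, (m < #|T|)%N -> al T = 0)
    & forall e, F e = \sum_T al T * (T \subset e)%:R.

Lemma eq_degree_le m F G : F =1 G -> degree_le m F -> degree_le m G.
Proof. by move=> FG [al al_small defF]; exists al => // e; rewrite -FG. Qed.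

Lemma degree_le_sub m F G :
  degree_le m F -> degree_le m G -> degree_le m (fun e => F e - G e).
Proof.
move=> [al al_small defF] [be be_small defG].
exists (fun T => al T - be T) => [T hT|e]; first by rewrite al_small ?be_small ?subr0.
by rewrite defF defG -sumrB; apply: eq_bigr => T _; rewrite mulrBl.
Qed.

Lemma degree_le_mul_ind m F c :
  degree_le m F -> degree_le m.+1 (fun e => F e * ind c e).
Proof.
move=> [al al_small defF].
exists (fun U => \sum_(T | T :|: [set c] == U) al T) => [U hU|e].
  apply: big1 => T /eqP defU; apply: al_small.
  by move: hU; rewrite -defU setUC cardsU1; case: (c \in T) => /=; lia.
rewrite defF mulr_suml; under [RHS]eq_bigr do rewrite mulr_suml.
rewrite (exchange_big_dep xpredT) //=; apply: eq_bigr => T _.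
rewrite (big_pred1 (T :|: [set c])); last by move=> U; rewrite /= eq_sym.
by rewrite subUset sub1set /ind -mulrA -natrM mulnb.
Qed.

Lemma degree_le_pair_prod p t : degree_le t (pair_prod p t).
Proof.
elim: t => [|t IH].
  exists (fun T => (T == set0)%:R) => [T|e].
    by rewrite card_gt0 => /negbTE ->.
  rewrite /pair_prod big_ord0 (bigD1 set0) //= big1 ?addr0.
    by rewrite eqxx sub0set mul1r.
  by move=> T /negbTE ->; rewrite mul0r.
apply: (@eq_degree_le _ (fun e => pair_prod p t e * ind (p (2 * t)%N) e
                                 - pair_prod p t e * ind (p (2 * t).+1) e)).
  by move=> e; rewrite /pair_prod big_ord_recr /= mulrBr.
by apply: degree_le_sub; apply: degree_le_mul_ind.
Qed.

Lemma mem_imset_perm (s : {perm V}) x e : (x \in (s^-1)%g @: e) = (s x \in e).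
Proof. by rewrite (can2_imset_pre _ (permKV s) (permK s)) inE. Qed.

Lemma pair_prod_perm (s : {perm V}) p t e :
  pair_prod p t ((s^-1)%g @: e) = pair_prod (s \o p) t e.
Proof. by apply: eq_bigr => r _; rewrite /ind !mem_imset_perm. Qed.

Section Orthogonality.
Variables (k t : nat) (p : nat -> V).
Hypothesis p_inj : {in gtn (2 * t)%N &, injective p}.

Lemma pair_avoiding T : (#|T| < t)%N ->
  exists2 r, (r < t)%N & (p (2 * r)%N \notin T) && (p (2 * r).+1 \notin T).
Proof.
move=> small_T.
have [/existsP [r hr]|] := boolP [exists r : 'I_t,
  (p (2 * r)%N \notin T) && (p (2 * r).+1 \notin T)]; first by exists r.
rewrite negb_exists => /forallP meets_T.
pose b (r : 'I_t) : bool := p (2 * r)%N \notin T.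
pose g (r : 'I_t) := p (2 * r + b r)%N.
have g_lt (r : 'I_t) : (2 * r + b r)%N \in gtn (2 * t)%N.
  by rewrite unfold_in /=; have := ltn_ord r; have := leq_b1 (b r); lia.
have g_inj : injective g.
  move=> r1 r2 /(p_inj (g_lt r1) (g_lt r2)) eq_g; apply: val_inj => /=.
  by move: eq_g; have := leq_b1 (b r1); have := leq_b1 (b r2); lia.
have : g @: setT \subset T.
  apply/subsetP => _ /imsetP [r _ ->]; rewrite /g /b.
  have [inT|out] := boolP (p (2 * r)%N \in T); first by rewrite /= addn0.
  by rewrite /= addn1; have := meets_T r; rewrite out /= negbK.
by move/subset_leq_card; rewrite card_imset // cardsT card_ord leqNgt small_T.
Qed.

Lemma sum_subset_pair_prod T : (#|T| < t)%N ->
  \sum_(e : {set V} | #|e| == k) (T \subset e)%:R * pair_prod p t e = 0.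
Proof.
move=> /pair_avoiding [r0 lt_r0 /andP [a_out b_out]].
pose s := tperm (p (2 * r0)%N) (p (2 * r0).+1).
pose h e := (s^-1)%g @: e.
have mem_h x e : (x \in h e) = (s x \in e) by exact: mem_imset_perm.
have h_inv : involutive h by move=> e; apply/setP => x; rewrite !mem_h tpermK.
have card_h e : #|h e| = #|e| by rewrite card_imset //; apply: perm_inj.
have s_fixes x : x \in T -> s x = x.
  by move=> xT; apply: tpermD; [apply: contraNneq a_out | apply: contraNneq b_out] => ->.
have sub_h e : (T \subset h e) = (T \subset e).
  by apply/subsetP/subsetP => sub x xT; have := sub x xT; rewrite ?mem_h s_fixes.
have inj2 i j : (i < 2 * t)%N -> (j < 2 * t)%N -> i != j -> p i != p j.
  by move=> hi hj; apply: contra => /eqP /p_inj -> //.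
have pair_h e : pair_prod p t (h e) = - pair_prod p t e.
  rewrite /pair_prod (bigD1 (Ordinal lt_r0)) //= [in RHS](bigD1 (Ordinal lt_r0)) //=.
  rewrite /ind !mem_h /s tpermL tpermR -mulNr opprB; congr (_ * _).
  apply: eq_bigr => r /eqP ne_r; have := ltn_ord r.
  have ne : (r : nat) != r0 by apply/eqP => eq_r; apply: ne_r; apply: val_inj.
  move=> lt_r; rewrite !mem_h /s !tpermD //; apply: inj2; lia.
set S := LHS; have S_opp : S = - S.
  rewrite {1}/S (reindex_inj (can_inj h_inv)) /= -sumrN.
  by apply: eq_big => [e|e _]; rewrite ?card_h // sub_h pair_h mulrN.
by apply/eqP; rewrite -eqNr -S_opp.
Qed.

Lemma pair_prod_orthogonal s F : (s < t)%N -> degree_le s F ->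
  \sum_(e : {set V} | #|e| == k) F e * pair_prod p t e = 0.
Proof.
move=> lt_st [al al_small defF].
under eq_bigr do rewrite defF mulr_suml.
rewrite (exchange_big_dep xpredT) //=; apply: big1 => T _.
under eq_bigr do rewrite -mulrA; rewrite -mulr_sumr.
have [small_T|/al_small ->] := leqP #|T| s; last by rewrite mul0r.
by rewrite (eq_bigl _ _ (fun e => andbT _)) sum_subset_pair_prod ?mulr0 //; lia.
Qed.

End Orthogonality.

Lemma pair_prod_witness k t p : {in gtn (2 * k)%N &, injective p} -> (t <= k)%N ->
  exists2 e0 : {set V}, #|e0| == k & pair_prod p t e0 = 1.
Proof.
move=> p_inj le_tk.
(* the even vertices of the first t pairs, then the vertices 2t, ..., t+k-1 *)
pose g (j : 'I_k) := if (j < t)%N then (2 * j)%N else (t + j)%N.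
have g_lt j : g j \in gtn (2 * k)%N.
  by rewrite unfold_in /g /=; have := ltn_ord j; case: (ltnP j t); lia.
have g_inj : injective (p \o g).
  move=> j1 j2 /(p_inj _ _ (g_lt j1) (g_lt j2)); rewrite /g => eq_g; apply: val_inj => /=.
  by move: eq_g; case: (ltnP j1 t); case: (ltnP j2 t); lia.
exists ((p \o g) @: setT); first by rewrite card_imset // cardsT card_ord.
apply: big1 => r _; rewrite /ind; have lt_rk : (r < k)%N by apply: leq_trans (ltn_ord r) le_tk.
have -> : p (2 * r)%N \in (p \o g) @: setT.
  by apply/imsetP; exists (Ordinal lt_rk); rewrite //= /g /= ltn_ord.
suff /negbTE -> : p (2 * r).+1 \notin (p \o g) @: setT by rewrite subr0.
have odd_lt : (2 * r).+1 \in gtn (2 * k)%N.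
  by rewrite unfold_in /=; have := ltn_ord r; lia.
apply/imsetP => -[j _ /(p_inj _ _ odd_lt (g_lt j))]; rewrite /g.
by have := ltn_ord r; case: (ltnP j t); lia.
Qed.

End Slice.
Arguments pair_prod {R V} p t e.

Lemma disc_eq0 (R : realFieldType) n k (w u : {set 'I_n} -> R) :
  hw k w setT = 0 -> (forall pi, inner k (wperm w pi) u = 0) -> disc k w u = 0.
Proof.
move=> hw0 inner0; rewrite /disc /density hw0 !mul0r.
apply: (big_ind (fun x => x = 0)) => [||pi _]; first by [].
  by move=> x y -> ->; rewrite maxxx.
by rewrite inner0 subr0 normr0.
Qed.

Section PairWeights.
Variables (R : realFieldType) (n k : nat) (p : nat -> 'I_n).
Hypothesis p_inj : {in gtn (2 * k)%N &, injective p}.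

Lemma p_inj_le t : (t <= k)%N -> {in gtn (2 * t)%N &, injective p}.
Proof.
move=> le_tk; apply: sub_in2 p_inj => i; rewrite !unfold_in /=; lia.
Qed.

Definition pair_weight t : {set 'I_n} -> R :=
  fun e => ('C(n, k)%:R / l1norm k (pair_prod p t)) * pair_prod p t e.

Lemma l1norm_pair_prod_gt0 t : (t <= k)%N -> 0 < l1norm k (pair_prod (R := R) p t).
Proof.
move=> le_tk; have [e0 card_e0 e0_one] := pair_prod_witness R p_inj le_tk.
rewrite /l1norm (bigD1 e0) //= e0_one normr1 ltr_pwDl // sumr_ge0 // => e _.
Qed.

Lemma hw_pair_weight t : (0 < t <= k)%N -> hw k (pair_weight t) setT = 0.
Proof.
move=> /andP [t_gt0 le_tk]; rewrite /hw /pair_weight -mulr_sumr.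
have := sum_subset_pair_prod R k (p_inj_le le_tk) (T := set0).
rewrite cards0 => /(_ t_gt0); under eq_bigr do rewrite sub0set mul1r; move=> sum0.
rewrite (eq_bigl (fun e : {set 'I_n} => #|e| == k)) => [|e]; last by rewrite subsetT.
by rewrite sum0 mulr0.
Qed.

Lemma l1norm_pair_weight t : (t <= k)%N -> l1norm k (pair_weight t) = 'C(n, k)%:R.
Proof.
move=> /l1norm_pair_prod_gt0 l1_gt0; rewrite -[RHS](divfK (lt0r_neq0 l1_gt0)).
rewrite [in RHS]/l1norm mulr_sumr; apply: eq_bigr => e _.
by rewrite normrM ger0_norm // divr_ge0 // ltW.
Qed.

Lemma inner_perm_pair_weight s t (pi : {perm 'I_n}) : (s < t <= k)%N ->
  inner k (wperm (pair_weight s) pi) (pair_weight t) = 0.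
Proof.
move=> /andP [lt_st le_tk]; rewrite /inner /wperm /pair_weight.
under eq_bigr do rewrite pair_prod_perm mulrACA.
rewrite -mulr_sumr (pair_prod_orthogonal k (p_inj_le le_tk) lt_st) ?mulr0 //.
exact: degree_le_pair_prod.
Qed.

End PairWeights.

Theorem theorem1p1 (R : realType) (k : nat) (hk : (2 <= k)%N) (n : nat)
  (hn : (2 * k <= n)%N) :
  exists w : 'I_k -> ({set 'I_n} -> R),
    (forall i : 'I_k, hw k (w i) setT = 0 /\ l1norm k (w i) = ('C(n, k))%:R) /\
    (forall i j : 'I_k, (i < j)%N -> disc k (w i) (w j) = 0).
Proof.
have x0 : 'I_n by exists 0%N; lia.
pose p i : 'I_n := insubd x0 i.
have p_inj : {in gtn (2 * k)%N &, injective p}.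
  move=> i j; rewrite !unfold_in /= => lt_i lt_j /(congr1 val).
  by rewrite !val_insubd; case: (ltnP i n); case: (ltnP j n); lia.
exists (fun i => pair_weight R k p i.+1); split=> [i|i j lt_ij].
  split; [apply: (hw_pair_weight _ p_inj) | apply: (l1norm_pair_weight _ p_inj)];
  by rewrite /= ltn_ord.
apply: disc_eq0 => [|pi]; first by rewrite (hw_pair_weight _ p_inj) //; have := ltn_ord i; lia.
by rewrite (inner_perm_pair_weight _ p_inj) //; have := ltn_ord j; lia.
Qed.
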